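(* Let $\mathbb C$ be a homological category with finite colimits, and let $x\colon X\to A$, $y\colon Y\to A$ be morphisms whose images are normal monomorphisms. If $m$ is an internal multiplication $X\times Y\to A$ over $(A,1_A)$, then there is a unique morphism $p\colon A_3\to A$ with $p\gamma_1=m$, and this $p$ is an internal pregroupoid structure on the span $A/X\leftarrow A\to A/Y$.
   Context: A homological category is a regular pointed category in which the Split Short Five Lemma holds; images are taken in the (regular epi, mono) factorization; a normal monomorphism is a kernel of some morphism. Notation: $\iota_i$ coproduct injections, $[a,b]$ copairing, $\langle\cdot\rangle$ pairing. $(A+X)\times_A(A+Y)$ is the pullback of $[1,0]\colon A+X\to A$ and $[1,0]\colon A+Y\to A$, with projections $\pi_1,\pi_2$. An internal multiplication $X\times Y\to A$ over $(A,1_A)$ is a morphism $m\colon (A+X)\times_A(A+Y)\to A$ with $m\langle 1,\iota_1[1,0]\rangle=[1,x]$ and $m\langle\iota_1[1,0],1\rangle=[1,y]$. $A_3=A\times_{A/X}A\times_{A/Y}A$ is the limit of $A\xrightarrow{\mathsf{coker}(x)}A/X\xleftarrow{\mathsf{coker}(x)}A\xrightarrow{\mathsf{coker}(y)}A/Y\xleftarrow{\mathsf{coker}(y)}A$, and $\gamma_1=\langle [1,x]\pi_1,[1,0]\pi_1,[1,y]\pi_2\rangle$. An internal pregroupoid structure on the span $A/X\leftarrow A\to A/Y$ is a morphism $p\colon A_3\to A$ with $p\langle\pi_1,\pi_2,\pi_2\rangle=\pi_1$ on $A\times_{A/X}A$ and $p\langle\pi_1,\pi_1,\pi_2\rangle=\pi_2$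 on $A\times_{A/Y}A$ ($\pi_1,\pi_2$ the kernel-pair projections). *)

Set Implicit Arguments.
Unset Strict Implicit.

Record Category := {
  Obj :> Type;
  Hom : Obj -> Obj -> Type;
  idm : forall a, Hom a a;
  comp : forall a b c, Hom b c -> Hom a b -> Hom a c;
  comp_assoc : forall a b c d (h : Hom c d) (g : Hom b c) (f : Hom a b),
      comp h (comp g f) = comp (comp h g) f;
  comp_id_l : forall a b (f : Hom a b), comp (idm b) f = f;
  comp_id_r : forall a b (f : Hom a b), comp f (idm a) = f
}.

Arguments Hom {C} : rename.
Arguments idm {C} a : rename.
Arguments comp {C a b c} : rename.
Notation "g \o f" := (comp g f) (at level 40, left associativity).

Section Notions.
Variable C : Category.

Definition is_iso {a b : C} (f : Hom a b) : Prop :=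
  exists g : Hom b a, g \o f = idm a /\ f \o g = idm b.

Definition is_mono {a b : C} (f : Hom a b) : Prop :=
  forall t (g h : Hom t a), f \o g = f \o h -> g = h.

Definition is_initial (z : C) : Prop := forall b : C, exists! f : Hom z b, True.
Definition is_terminal (z : C) : Prop := forall b : C, exists! f : Hom b z, True.
Definition is_zero_obj (z : C) : Prop := is_initial z /\ is_terminal z.

Definition is_zero_mor {a b : C} (f : Hom a b) : Prop :=
  exists (z : C) (g : Hom a z) (h : Hom z b), is_zero_obj z /\ f = h \o g.

Definition pointed : Prop := exists z : C, is_zero_obj z.

Definition is_pullback {a b c P : C} (f : Hom a b) (g : Hom c b)
  (p1 : Hom P a) (p2 : Hom P c) : Prop :=
  f \o p1 = g \o p2 /\
  forall (T : C) (u : Hom T a) (v : Hom T c), f \o u = g \o v ->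
    exists! h : Hom T P, p1 \o h = u /\ p2 \o h = v.

Definition is_coequalizer {a b q : C} (f g : Hom a b) (e : Hom b q) : Prop :=
  e \o f = e \o g /\
  forall (T : C) (u : Hom b T), u \o f = u \o g ->
    exists! h : Hom q T, h \o e = u.

Definition is_coproduct {a b S : C} (i1 : Hom a S) (i2 : Hom b S) : Prop :=
  forall (T : C) (f : Hom a T) (g : Hom b T),
    exists! h : Hom S T, h \o i1 = f /\ h \o i2 = g.

Definition is_kernel {a b K : C} (f : Hom a b) (k : Hom K a) : Prop :=
  is_zero_mor (f \o k) /\
  forall (T : C) (u : Hom T a), is_zero_mor (f \o u) ->
    exists! h : Hom T K, k \o h = u.

Definition is_cokernel {a b Q : C} (f : Hom a b) (q : Hom b Q) : Prop :=
  is_zero_mor (q \o f) /\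
  forall (T : C) (u : Hom b T), is_zero_mor (u \o f) ->
    exists! h : Hom Q T, h \o q = u.

Definition regular_epi {b q : C} (e : Hom b q) : Prop :=
  exists (a : C) (f g : Hom a b), is_coequalizer f g e.

Definition normal_mono {K a : C} (k : Hom K a) : Prop :=
  exists (b : C) (f : Hom a b), is_kernel f k.

Definition has_finite_limits : Prop :=
  (exists t : C, is_terminal t) /\
  forall (a b c : C) (f : Hom a b) (g : Hom c b),
    exists (P : C) (p1 : Hom P a) (p2 : Hom P c), is_pullback f g p1 p2.

Definition has_finite_colimits : Prop :=
  (exists i : C, is_initial i) /\
  (forall a b : C, exists (S : C) (i1 : Hom a S) (i2 : Hom b S), is_coproduct i1 i2) /\
  (forall (a b : C) (f g : Hom a b), exists (q : C) (e : Hom b q), is_coequalizer f g e).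

Definition regular : Prop :=
  has_finite_limits /\
  (forall (a b K : C) (f : Hom a b) (k1 k2 : Hom K a), is_pullback f f k1 k2 ->
     exists (q : C) (e : Hom a q), is_coequalizer k1 k2 e) /\
  (forall (a b c P : C) (e : Hom a b) (h : Hom c b) (p1 : Hom P a) (p2 : Hom P c),
     regular_epi e -> is_pullback e h p1 p2 -> regular_epi p2).

Definition split_short_five : Prop :=
  forall (K A B K' A' B' : C)
    (k : Hom K A) (p : Hom A B) (s : Hom B A)
    (k' : Hom K' A') (p' : Hom A' B') (s' : Hom B' A')
    (u : Hom K K') (v : Hom A A') (w : Hom B B'),
    p \o s = idm B -> p' \o s' = idm B' ->
    is_kernel p k -> is_kernel p' k' ->
    v \o k = k' \o u -> p' \o v = w \o p -> v \o s = s' \o w ->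
    is_iso u -> is_iso w -> is_iso v.

Definition homological : Prop := pointed /\ regular /\ split_short_five.

Definition image_is_normal {X A : C} (f : Hom X A) : Prop :=
  exists (I : C) (e : Hom X I) (mo : Hom I A),
    regular_epi e /\ is_mono mo /\ f = mo \o e /\ normal_mono mo.

Definition is_copair {a b S T : C} (i1 : Hom a S) (i2 : Hom b S)
  (f : Hom a T) (g : Hom b T) (h : Hom S T) : Prop :=
  h \o i1 = f /\ h \o i2 = g.

Definition is_copair_id_zero {A X S : C} (i1 : Hom A S) (i2 : Hom X S)
  (h : Hom S A) : Prop :=
  h \o i1 = idm A /\ is_zero_mor (h \o i2).

(* A_3 = A x_{A/X} A x_{A/Y} A with its three projections *)
Definition is_A3 {A QX QY A3 : C} (qx : Hom A QX) (qy : Hom A QY)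
  (a1 a2 a3 : Hom A3 A) : Prop :=
  qx \o a1 = qx \o a2 /\ qy \o a2 = qy \o a3 /\
  forall (T : C) (b1 b2 b3 : Hom T A),
    qx \o b1 = qx \o b2 -> qy \o b2 = qy \o b3 ->
    exists! h : Hom T A3, a1 \o h = b1 /\ a2 \o h = b2 /\ a3 \o h = b3.

(* m : (A+X) x_A (A+Y) -> A is an internal multiplication X x Y -> A over (A,1_A):
   m <1, i1[1,0]> = [1,x]  and  m <i1[1,0], 1> = [1,y];
   here the pairings <_,_> are the (unique) maps into the pullback P with the
   prescribed components. *)
Definition internal_multiplication {A AX AY P : C}
  (iX1 : Hom A AX) (iY1 : Hom A AY)
  (rX0 : Hom AX A) (rY0 : Hom AY A) (cX : Hom AX A) (cY : Hom AY A)
  (pi1 : Hom P AX) (pi2 : Hom P AY) (m : Hom P A) : Prop :=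
  (forall u : Hom AX P, pi1 \o u = idm AX -> pi2 \o u = iY1 \o rX0 -> m \o u = cX) /\
  (forall v : Hom AY P, pi1 \o v = iX1 \o rY0 -> pi2 \o v = idm AY -> m \o v = cY).

(* p gamma_1 = m, where gamma_1 = <[1,x]pi1, [1,0]pi1, [1,y]pi2> : P -> A_3 *)
Definition factors_gamma1 {A AX AY P A3 : C}
  (rX0 : Hom AX A) (cX : Hom AX A) (cY : Hom AY A)
  (pi1 : Hom P AX) (pi2 : Hom P AY) (a1 a2 a3 : Hom A3 A)
  (m : Hom P A) (p : Hom A3 A) : Prop :=
  forall g : Hom P A3,
    a1 \o g = cX \o pi1 -> a2 \o g = rX0 \o pi1 -> a3 \o g = cY \o pi2 ->
    p \o g = m.

Definition internal_pregroupoid {A QX QY A3 : C} (qx : Hom A QX) (qy : Hom A QY)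
  (a1 a2 a3 : Hom A3 A) (p : Hom A3 A) : Prop :=
  (forall (K : C) (k1 k2 : Hom K A), is_pullback qx qx k1 k2 ->
     forall t : Hom K A3, a1 \o t = k1 -> a2 \o t = k2 -> a3 \o t = k2 ->
       p \o t = k1) /\
  (forall (K : C) (k1 k2 : Hom K A), is_pullback qy qy k1 k2 ->
     forall t : Hom K A3, a1 \o t = k1 -> a2 \o t = k1 -> a3 \o t = k2 ->
       p \o t = k2).

End Notions.


(* In a homological category the kernel and a section of a split epimorphism are
   jointly strongly epic (split short five lemma); everything below rests on this.
   Through [A3 -> A x_{A/Y} A], A3 is a split extension of the kernel pair of
   [A -> A/Y] by the normal image of x, and its section and kernel lie in the image of
   gamma_1 up to the regular epimorphisms onto the images of x and y. Hence gamma_1 is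
   extremal, thus regular, epic. Its kernel is again a split extension, on whose
   section and kernel m vanishes because [m <1, i1[1,0]> = [1,x]] and
   [m <i1[1,0], 1> = [1,y]]; so m factors uniquely through gamma_1 as p. The pregroupoid laws are checked on the
   kernel pairs of [A -> A/X] and [A -> A/Y], split extensions of A by the normal
   images of x and y, where p is computed through gamma_1. *)

Set Implicit Arguments.

Ltac assoc_r := repeat rewrite <- comp_assoc; repeat rewrite comp_id_l; repeat rewrite comp_id_r.

Section General.
Context {C : Category}.

Definition is_epi {a b : C} (f : Hom a b) : Prop :=
  forall t (g h : Hom b t), g \o f = h \o f -> g = h.

Definition factors_through {s b a : C} (j : Hom s b) (f : Hom a b) : Prop :=
  exists t : Hom a s, j \o t = f.

Definition is_extremal_epi {b d : C} (f : Hom b d) : Prop :=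
  forall s (j : Hom s d) (g : Hom b s), is_mono j -> f = j \o g -> is_iso j.

Lemma comp_eq_assoc {b c d : C} {f : Hom c d} {g : Hom b c} {h : Hom b d} :
  f \o g = h -> forall e (u : Hom e b), f \o (g \o u) = h \o u.
Proof. intros E e u. rewrite comp_assoc, E. reflexivity. Qed.

Lemma zero_mor_comp_l {a b c : C} (f : Hom a b) (g : Hom b c) :
  is_zero_mor f -> is_zero_mor (g \o f).
Proof. intros [z [u [v [Hz ->]]]]. exists z, u, (g \o v). split; auto. apply comp_assoc. Qed.

Lemma zero_mor_comp_r {a b c : C} (f : Hom b c) (g : Hom a b) :
  is_zero_mor f -> is_zero_mor (f \o g).
Proof. intros [z [u [v [Hz ->]]]]. exists z, (u \o g), v. split; auto. symmetry; apply comp_assoc. Qed.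

Lemma terminal_hom_eq {a t : C} (f g : Hom a t) : is_terminal t -> f = g.
Proof. intros H. destruct (H a) as [w [_ Hw]]. rewrite <- (Hw f I), (Hw g I). reflexivity. Qed.

Lemma initial_hom_eq {t a : C} (f g : Hom t a) : is_initial t -> f = g.
Proof. intros H. destruct (H a) as [w [_ Hw]]. rewrite <- (Hw f I), (Hw g I). reflexivity. Qed.

Lemma zero_mor_eq {a b : C} (f g : Hom a b) : is_zero_mor f -> is_zero_mor g -> f = g.
Proof.
  intros [z [u [v [Hz ->]]]] [z' [u' [v' [Hz' ->]]]].
  destruct (proj1 Hz z') as [t _].
  rewrite (initial_hom_eq v (v' \o t) (proj1 Hz)).
  rewrite (terminal_hom_eq u' (t \o u) (proj2 Hz')).
  symmetry; apply comp_assoc.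
Qed.

Lemma zero_mor_exists : pointed C -> forall a b : C, exists f : Hom a b, is_zero_mor f.
Proof.
  intros [z Hz] a b. destruct (proj1 Hz b) as [v _]. destruct (proj2 Hz a) as [u _].
  exists (v \o u), z, u, v. auto.
Qed.

Lemma kernel_mono {a b K : C} (f : Hom a b) (k : Hom K a) : is_kernel f k -> is_mono k.
Proof.
  intros [Hz Hu] t g h E.
  assert (Z : is_zero_mor (f \o (k \o g))) by (rewrite comp_assoc; apply zero_mor_comp_r; exact Hz).
  destruct (Hu t (k \o g) Z) as [w [_ Hw]].
  rewrite <- (Hw g eq_refl), (Hw h (eq_sym E)). reflexivity.
Qed.

Lemma coequalizer_epi {a b q : C} (f g : Hom a b) (e : Hom b q) :
  is_coequalizer f g e -> is_epi e.
Proof.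
  intros [He Hu] t u v E.
  assert (Hc : (u \o e) \o f = (u \o e) \o g) by (assoc_r; rewrite He; reflexivity).
  destruct (Hu t (u \o e) Hc) as [w [_ Hw]].
  rewrite <- (Hw u eq_refl), (Hw v (eq_sym E)). reflexivity.
Qed.

Lemma regular_epi_epi {b q : C} (e : Hom b q) : regular_epi e -> is_epi e.
Proof. intros [a [f [g H]]]. exact (coequalizer_epi H). Qed.

Lemma regular_epi_factors_through {b q s d : C} {e : Hom b q} {j : Hom s d} {h : Hom q d} :
  regular_epi e -> is_mono j -> factors_through j (h \o e) -> factors_through j h.
Proof.
  intros He Hj [g E]. pose proof He as [a [f1 [f2 [Hc Hu]]]].
  assert (G : g \o f1 = g \o f2).
  { apply Hj. rewrite !comp_assoc, E. assoc_r. rewrite Hc. reflexivity. }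
  destruct (Hu _ g G) as [t [Ht _]]. exists t.
  apply (regular_epi_epi He). rewrite <- comp_assoc, Ht. auto.
Qed.

Lemma pullback_hom_eq {a b c P T : C} {f : Hom a b} {g : Hom c b} {p1 : Hom P a} {p2 : Hom P c}
  (Hpb : is_pullback f g p1 p2) (u v : Hom T P) :
  p1 \o u = p1 \o v -> p2 \o u = p2 \o v -> u = v.
Proof.
  destruct Hpb as [Hs Hu]. intros E1 E2.
  assert (Hc : f \o (p1 \o u) = g \o (p2 \o u)) by (rewrite !comp_assoc, Hs; reflexivity).
  destruct (Hu T _ _ Hc) as [w [_ Hw]].
  rewrite <- (Hw u (conj eq_refl eq_refl)), (Hw v (conj (eq_sym E1) (eq_sym E2))). reflexivity.
Qed.

Lemma pullback_hom_exists {a b c P T : C} {f : Hom a b} {g : Hom c b} {p1 : Hom P a} {p2 : Hom P c}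
  (Hpb : is_pullback f g p1 p2) (u : Hom T a) (v : Hom T c) :
  f \o u = g \o v -> exists h, p1 \o h = u /\ p2 \o h = v.
Proof. destruct Hpb as [_ Hu]. intros E. destruct (Hu T u v E) as [w [Hw _]]. eauto. Qed.

Lemma pullback_swap {a b P : C} (f : Hom a b) (p1 p2 : Hom P a) :
  is_pullback f f p1 p2 -> is_pullback f f p2 p1.
Proof.
  intros [Hs Hu]. split; auto. intros T u v E.
  destruct (Hu T v u (eq_sym E)) as [w [[W1 W2] Hw]]. exists w. split; auto.
  intros w' [E1 E2]. apply Hw. auto.
Qed.

Lemma pullback_mono {a b c P : C} (f : Hom a b) (g : Hom c b) (p1 : Hom P a) (p2 : Hom P c) :
  is_pullback f g p1 p2 -> is_mono f -> is_mono p2.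
Proof.
  intros H Hf T u v E. apply (pullback_hom_eq H); auto.
  apply Hf. rewrite !comp_assoc, (proj1 H). assoc_r. rewrite E. reflexivity.
Qed.

Lemma coproduct_hom_eq {a b S T : C} {i1 : Hom a S} {i2 : Hom b S}
  (H : is_coproduct i1 i2) (u v : Hom S T) :
  u \o i1 = v \o i1 -> u \o i2 = v \o i2 -> u = v.
Proof.
  intros E1 E2. destruct (H T (u \o i1) (u \o i2)) as [w [_ Hw]].
  rewrite <- (Hw u (conj eq_refl eq_refl)), (Hw v (conj (eq_sym E1) (eq_sym E2))). reflexivity.
Qed.

Lemma split_ext_mono_iso (HS : split_short_five C) {K B D S : C}
  {q : Hom B D} {s : Hom D B} {k : Hom K B} {j : Hom S B} :
  q \o s = idm D -> is_kernel q k -> is_mono j ->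
  factors_through j s -> factors_through j k -> is_iso j.
Proof.
  intros Hqs Hk Hj [s' Es] [k' Ek].
  assert (Hid : forall a : C, is_iso (idm a)) by (intro a; exists (idm a); split; apply comp_id_l).
  apply (HS K S D K B D k' (q \o j) s' k q s (idm K) j (idm D)); auto;
    try (assoc_r; first [rewrite Es | rewrite Ek | idtac]; auto; fail).
  destruct Hk as [Hkz Hku]. split.
  - assoc_r. rewrite Ek. exact Hkz.
  - intros T u Hzu.
    destruct (Hku T (j \o u)) as [h [Hh Hh']]; [rewrite comp_assoc; exact Hzu|].
    exists h. split.
    + apply Hj. rewrite comp_assoc, Ek. exact Hh.
    + intros h' E. apply Hh'. rewrite <- Ek, <- E. assoc_r. reflexivity.
Qed.

Lemma factors_through_of_split_ext (HS : split_short_five C) (HL : has_finite_limits C)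
  {K B D S E : C} {q : Hom B D} {s : Hom D B} {k : Hom K B} {j : Hom S E} {f : Hom B E} :
  q \o s = idm D -> is_kernel q k -> is_mono j ->
  factors_through j (f \o s) -> factors_through j (f \o k) -> factors_through j f.
Proof.
  intros Hqs Hk Hj [s' Es] [k' Ek].
  destruct (proj2 HL _ _ _ j f) as [Pb [j1 [j2 Hpb]]].
  destruct (pullback_hom_exists Hpb s' s Es) as [hs [_ Hs]].
  destruct (pullback_hom_exists Hpb k' k Ek) as [hk [_ Hk']].
  destruct (split_ext_mono_iso HS Hqs Hk (pullback_mono Hpb Hj)
              (ex_intro _ hs Hs) (ex_intro _ hk Hk')) as [i [_ Hi]].
  exists (j1 \o i). rewrite comp_assoc, (proj1 Hpb), <- comp_assoc, Hi. apply comp_id_r.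
Qed.

Lemma product_exists (HL : has_finite_limits C) (B T : C) :
  exists (PBT : C) (q1 : Hom PBT B) (q2 : Hom PBT T),
    forall (W : C) (u : Hom W B) (v : Hom W T), exists! h, q1 \o h = u /\ q2 \o h = v.
Proof.
  destruct HL as [[tm Htm] Hpb].
  destruct (Htm B) as [tb _]. destruct (Htm T) as [tt _].
  destruct (Hpb _ _ _ tb tt) as [P [p1 [p2 [_ Hu]]]].
  exists P, p1, p2. intros W u v. apply Hu. apply (terminal_hom_eq _ _ Htm).
Qed.

Lemma equalizer_exists (HL : has_finite_limits C) {B T : C} (u v : Hom B T) :
  exists (E : C) (j : Hom E B), u \o j = v \o j /\
    (forall (W : C) (w : Hom W B), u \o w = v \o w -> factors_through j w) /\ is_mono j.
Proof.
  destruct (product_exists HL B T) as [PBT [q1 [q2 Hp]]].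
  destruct (Hp B (idm B) u) as [pu [[Pu1 Pu2] _]].
  destruct (Hp B (idm B) v) as [pv [[Pv1 Pv2] _]].
  destruct (proj2 HL _ _ _ pu pv) as [E [e1 [e2 HE]]].
  pose proof (proj1 HE) as Hs.
  assert (E12 : e1 = e2).
  { transitivity (q1 \o (pu \o e1)); [rewrite comp_assoc, Pu1, comp_id_l; reflexivity|].
    rewrite Hs, comp_assoc, Pv1, comp_id_l. reflexivity. }
  subst e2.
  exists E, e1. split; [|split].
  - rewrite <- Pu2, <- Pv2. assoc_r. rewrite Hs. reflexivity.
  - intros W w Hw.
    destruct (pullback_hom_exists HE w w) as [h [H1 _]]; [|exists h; exact H1].
    destruct (Hp W w (u \o w)) as [z [_ Hz]].
    rewrite <- (Hz (pu \o w)), <- (Hz (pv \o w)); auto;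
      split; rewrite comp_assoc; first [rewrite Pu1 | rewrite Pu2 | rewrite Pv1 | rewrite Pv2];
      auto using comp_id_l.
  - intros W a b Eab. apply (pullback_hom_eq HE); auto.
Qed.

Lemma split_ext_jointly_epic (HS : split_short_five C) (HL : has_finite_limits C)
  {K B D T : C} {q : Hom B D} {s : Hom D B} {k : Hom K B} {u v : Hom B T} :
  q \o s = idm D -> is_kernel q k -> u \o k = v \o k -> u \o s = v \o s -> u = v.
Proof.
  intros Hqs Hk Ek Es.
  destruct (equalizer_exists HL u v) as [E [j [Hj [Hfac Hm]]]].
  destruct (split_ext_mono_iso HS Hqs Hk Hm (Hfac _ s Es) (Hfac _ k Ek)) as [i [_ Hi]].
  rewrite <- (comp_id_r u), <- (comp_id_r v), <- Hi, !comp_assoc, Hj. reflexivity.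
Qed.

Lemma kernel_exists (HP : pointed C) (HL : has_finite_limits C) {A B : C} (f : Hom A B) :
  exists (K : C) (k : Hom K A), is_kernel f k.
Proof.
  destruct HP as [Z HZ]. destruct (proj1 HZ B) as [zb _].
  destruct (proj2 HL _ _ _ f zb) as [K [p1 [p2 Hpb]]].
  exists K, p1. split.
  - rewrite (proj1 Hpb). exists Z, p2, zb. auto.
  - intros T u Hu. destruct (proj2 HZ T) as [tz _].
    destruct (pullback_hom_exists Hpb u tz) as [h [H1 H2]].
    { apply zero_mor_eq; auto. exists Z, tz, zb. auto. }
    exists h. split; auto. intros h' E.
    apply (pullback_hom_eq Hpb); [rewrite E; auto | apply (terminal_hom_eq _ _ (proj2 HZ))].
Qed.

Lemma kernel_pair_coequalizer_factor_mono (HR : regular C) {B D R Q : C}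
  {f : Hom B D} {k1 k2 : Hom R B} {q : Hom B Q} {j : Hom Q D} :
  is_pullback f f k1 k2 -> is_coequalizer k1 k2 q -> j \o q = f -> is_mono j.
Proof.
  intros Hker Hq Hjq. destruct HR as [HL [_ Hstable]].
  assert (Rq : regular_epi q) by (exists R, k1, k2; exact Hq).
  destruct (proj2 HL _ _ _ j j) as [L [l1 [l2 HLp]]].
  assert (Hl : l1 = l2).
  { destruct (proj2 HL _ _ _ q l1) as [M [m1 [m2 HM]]].
    destruct (proj2 HL _ _ _ q (l2 \o m2)) as [N [n1 [n2 HN]]].
    assert (Ef : f \o (m1 \o n2) = f \o n1).
    { rewrite <- Hjq. assoc_r. rewrite (proj1 HN), (comp_eq_assoc (proj1 HM)). assoc_r.
      rewrite (comp_eq_assoc (proj1 HLp)). assoc_r. reflexivity. }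
    destruct (pullback_hom_exists Hker _ _ Ef) as [w [W1 W2]].
    apply (regular_epi_epi (Hstable _ _ _ _ _ _ _ _ Rq HM)).
    apply (regular_epi_epi (Hstable _ _ _ _ _ _ _ _ Rq HN)). assoc_r.
    transitivity (q \o (m1 \o n2)); [rewrite (comp_eq_assoc (proj1 HM)); assoc_r; reflexivity|].
    rewrite <- W1, (comp_eq_assoc (proj1 Hq)). assoc_r. rewrite W2, (proj1 HN). assoc_r.
    reflexivity. }
  intros T a b E. destruct (pullback_hom_exists HLp a b E) as [h [H1 H2]].
  rewrite <- H1, <- H2, Hl. reflexivity.
Qed.

Lemma extremal_epi_regular (HR : regular C) {B D : C} (f : Hom B D) :
  is_extremal_epi f -> regular_epi f.
Proof.
  intros Hext. pose proof HR as [HL [Hkp _]].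
  destruct (proj2 HL _ _ _ f f) as [R [k1 [k2 Hker]]].
  destruct (Hkp _ _ _ _ _ _ Hker) as [Q [q Hq]].
  destruct (proj2 Hq _ f (proj1 Hker)) as [j [Hjq _]].
  pose proof (kernel_pair_coequalizer_factor_mono HR Hker Hq Hjq) as Hj.
  destruct (Hext Q j q Hj (eq_sym Hjq)) as [ji [Hi1 Hi2]].
  exists R, k1, k2. split.
  - rewrite <- Hjq. assoc_r. rewrite (proj1 Hq). reflexivity.
  - intros T u Hu. destruct (proj2 Hq T u Hu) as [t [Ht Htu]].
    exists (t \o ji). split.
    + rewrite <- Hjq. assoc_r. rewrite (comp_eq_assoc Hi1), comp_id_l. exact Ht.
    + intros h' E. assert (Et : t = h' \o j) by (apply Htu; rewrite <- comp_assoc, Hjq; exact E).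
      subst t. rewrite <- comp_assoc, Hi2, comp_id_r. reflexivity.
Qed.

Lemma regular_epi_factor_of_kernel (HR : regular C) (HS : split_short_five C) (HP : pointed C)
  {B Q K T : C} {e : Hom B Q} {ke : Hom K B} (h : Hom B T) :
  regular_epi e -> is_kernel e ke -> is_zero_mor (h \o ke) -> exists h', h' \o e = h.
Proof.
  intros He Hk Hz. destruct HR as [HL _].
  destruct (proj2 HL _ _ _ e e) as [R [k1 [k2 Hker]]].
  destruct (pullback_hom_exists Hker (idm B) (idm B) eq_refl) as [d [D1 D2]].
  destruct (kernel_exists HP HL k2) as [K2 [kk Hkk]].
  assert (Hh : h \o k1 = h \o k2).
  { apply (split_ext_jointly_epic HS HL D2 Hkk).
    - assert (Z : is_zero_mor (e \o (k1 \o kk))).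
      { rewrite comp_assoc, (proj1 Hker), <- comp_assoc. apply zero_mor_comp_l, Hkk. }
      destruct (proj2 Hk _ _ Z) as [w [Hw _]].
      apply zero_mor_eq.
      + rewrite <- comp_assoc, <- Hw, comp_assoc. apply zero_mor_comp_r, Hz.
      + rewrite <- comp_assoc. apply zero_mor_comp_l, Hkk.
    - assoc_r. rewrite D1, D2. reflexivity. }
  destruct He as [W [f1 [f2 [Hc Hu]]]].
  destruct (pullback_hom_exists Hker f1 f2 Hc) as [w [W1 W2]].
  destruct (Hu T h) as [h' [Hh' _]]; [rewrite <- W1, <- W2, !comp_assoc, Hh; reflexivity|].
  eauto.
Qed.

Lemma normal_image_cokernel_kernel (HP : pointed C) {X I A Q : C}
  (x : Hom X A) (e : Hom X I) (mo : Hom I A) (q : Hom A Q) :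
  regular_epi e -> normal_mono mo -> x = mo \o e -> is_cokernel x q -> is_kernel q mo.
Proof.
  intros He [B [phi Hphi]] Ex Hq. split.
  - destruct (zero_mor_exists HP I Q) as [z Hz]. replace (q \o mo) with z; auto.
    apply (regular_epi_epi He). apply zero_mor_eq; [apply zero_mor_comp_r; exact Hz|].
    rewrite <- comp_assoc, <- Ex. exact (proj1 Hq).
  - intros T u Hu.
    assert (Zx : is_zero_mor (phi \o x))
      by (rewrite Ex, comp_assoc; apply zero_mor_comp_r; exact (proj1 Hphi)).
    destruct (proj2 Hq _ _ Zx) as [phi' [Hp' _]].
    apply (proj2 Hphi). rewrite <- Hp', <- comp_assoc. apply zero_mor_comp_l. exact Hu.
Qed.

Lemma kernel_pair_proj_kernel (HP : pointed C) {I A Q K : C}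
  (q : Hom A Q) (mo : Hom I A) (k1 k2 : Hom K A) :
  is_kernel q mo -> is_pullback q q k1 k2 ->
  exists w : Hom I K, k1 \o w = mo /\ is_zero_mor (k2 \o w) /\ is_kernel k2 w.
Proof.
  intros Hk Hpb. destruct (zero_mor_exists HP I A) as [z Hz].
  destruct (pullback_hom_exists Hpb mo z) as [w [W1 W2]].
  { apply zero_mor_eq; [exact (proj1 Hk) | apply zero_mor_comp_l; auto]. }
  exists w. rewrite W2. split; [auto | split; [auto | split; [rewrite W2; auto |]]].
  intros T u Hu.
  assert (Z : is_zero_mor (q \o (k1 \o u))).
  { rewrite comp_assoc, (proj1 Hpb), <- comp_assoc. apply zero_mor_comp_l, Hu. }
  destruct (proj2 Hk _ _ Z) as [h [Hh Hh']].
  exists h. split.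
  - apply (pullback_hom_eq Hpb).
    + rewrite comp_assoc, W1. auto.
    + apply zero_mor_eq; auto. rewrite comp_assoc, W2. apply zero_mor_comp_r; auto.
  - intros h' E. apply Hh'. rewrite <- E, comp_assoc, W1. reflexivity.
Qed.

Lemma pullback_graph_l {a b c P : C} {f : Hom a b} {g : Hom c b} {p1 : Hom P a} {p2 : Hom P c}
  (t : Hom b c) :
  is_pullback f g p1 p2 -> g \o t = idm b -> exists s, p1 \o s = idm a /\ p2 \o s = t \o f.
Proof.
  intros Hpb Ht. apply (pullback_hom_exists Hpb).
  rewrite comp_id_r, comp_assoc, Ht, comp_id_l. reflexivity.
Qed.

Lemma pullback_graph_r {a b c P : C} {f : Hom a b} {g : Hom c b} {p1 : Hom P a} {p2 : Hom P c}
  (t : Hom b a) :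
  is_pullback f g p1 p2 -> f \o t = idm b -> exists s, p1 \o s = t \o g /\ p2 \o s = idm c.
Proof.
  intros Hpb Ht. apply (pullback_hom_exists Hpb).
  rewrite comp_id_r, comp_assoc, Ht, comp_id_l. reflexivity.
Qed.

Lemma cokernel_coequalizes_copairs {A X S Q : C} {i1 : Hom A S} {i2 : Hom X S}
  {x : Hom X A} {c r : Hom S A} {q : Hom A Q} :
  is_coproduct i1 i2 -> is_copair i1 i2 (idm A) x c -> is_copair_id_zero i1 i2 r ->
  is_cokernel x q -> q \o c = q \o r.
Proof.
  intros Hcop [C1 C2] [R1 R2] [Hqx _].
  apply (coproduct_hom_eq Hcop); assoc_r.
  - rewrite C1, R1. reflexivity.
  - rewrite C2. apply zero_mor_eq; [exact Hqx | apply zero_mor_comp_l, R2].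
Qed.

Section A3.
Variables (A QX QY A3 : C) (qx : Hom A QX) (qy : Hom A QY) (a1 a2 a3 : Hom A3 A).
Hypothesis HA3 : is_A3 qx qy a1 a2 a3.

Lemma A3_hom_eq {T : C} (f g : Hom T A3) :
  a1 \o f = a1 \o g -> a2 \o f = a2 \o g -> a3 \o f = a3 \o g -> f = g.
Proof.
  destruct HA3 as [H1 [H2 Hu]]. intros E1 E2 E3.
  assert (C1 : qx \o (a1 \o f) = qx \o (a2 \o f)) by (rewrite !comp_assoc, H1; reflexivity).
  assert (C2 : qy \o (a2 \o f) = qy \o (a3 \o f)) by (rewrite !comp_assoc, H2; reflexivity).
  destruct (Hu T _ _ _ C1 C2) as [w [_ Hw]].
  rewrite <- (Hw f), (Hw g); auto.
Qed.

Lemma A3_zero_mor (HP : pointed C) {T : C} (f : Hom T A3) :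
  is_zero_mor (a1 \o f) -> is_zero_mor (a2 \o f) -> is_zero_mor (a3 \o f) -> is_zero_mor f.
Proof.
  intros Z1 Z2 Z3. destruct (zero_mor_exists HP T A3) as [z Hz].
  replace f with z; auto.
  apply A3_hom_eq; apply zero_mor_eq; auto; apply zero_mor_comp_l; auto.
Qed.

Lemma A3_map_exists {AX AY P : C} {rX0 cX : Hom AX A} {rY0 cY : Hom AY A}
  {pi1 : Hom P AX} {pi2 : Hom P AY} :
  is_pullback rX0 rY0 pi1 pi2 -> qx \o cX = qx \o rX0 -> qy \o cY = qy \o rY0 ->
  exists g : Hom P A3, a1 \o g = cX \o pi1 /\ a2 \o g = rX0 \o pi1 /\ a3 \o g = cY \o pi2.
Proof.
  intros [Hsq _] EX EY. destruct HA3 as [_ [_ Hu]].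
  destruct (Hu P (cX \o pi1) (rX0 \o pi1) (cY \o pi2)) as [g [Hg _]];
    [rewrite !comp_assoc, EX | rewrite Hsq, !comp_assoc, EY |]; eauto.
Qed.

Lemma A3_proj23_kernel (HP : pointed C) {I K : C} {mo : Hom I A} {c1 c2 : Hom K A}
  {rho : Hom A3 K} {ka : Hom I A3} :
  is_kernel qx mo -> is_pullback qy qy c1 c2 -> c1 \o rho = a2 -> c2 \o rho = a3 ->
  a1 \o ka = mo -> is_zero_mor (a2 \o ka) -> is_zero_mor (a3 \o ka) -> is_kernel rho ka.
Proof.
  intros Hk Hker R1 R2 K1 K2 K3. split.
  - destruct (zero_mor_exists HP I K) as [z Hz]. replace (rho \o ka) with z; auto.
    apply (pullback_hom_eq Hker); apply zero_mor_eq; try (apply zero_mor_comp_l; exact Hz);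
      rewrite comp_assoc; [rewrite R1 | rewrite R2]; assumption.
  - intros T u Hu.
    assert (Z1 : is_zero_mor (qx \o (a1 \o u))).
    { rewrite comp_assoc, (proj1 HA3), <- R1. assoc_r. apply zero_mor_comp_l, zero_mor_comp_l, Hu. }
    destruct (proj2 Hk _ _ Z1) as [h [Hh Hh']].
    exists h. split.
    + apply A3_hom_eq.
      * rewrite comp_assoc, K1. exact Hh.
      * apply zero_mor_eq; [rewrite comp_assoc; apply zero_mor_comp_r, K2 |].
        rewrite <- R1, <- comp_assoc. apply zero_mor_comp_l, Hu.
      * apply zero_mor_eq; [rewrite comp_assoc; apply zero_mor_comp_r, K3 |].
        rewrite <- R2, <- comp_assoc. apply zero_mor_comp_l, Hu.
    + intros h' E. apply Hh'. rewrite <- E, comp_assoc, K1. reflexivity.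
Qed.

End A3.

End General.

Ltac zero_mor_search :=
  first [ assumption
        | apply zero_mor_comp_r; assoc_r; assumption
        | apply zero_mor_comp_l; zero_mor_search
        | rewrite comp_assoc; zero_mor_search ].
Ltac zero_mor := assoc_r; zero_mor_search.

Ltac rewrite_comp_hyp :=
  match goal with
  | H : ?f \o ?g = _ |- context [?f \o ?g] => rewrite H
  | H : ?f \o ?g = _ |- context [?f \o (?g \o _)] => rewrite (comp_eq_assoc H)
  end.
Ltac cat_simp := assoc_r; repeat (rewrite_comp_hyp; assoc_r).

Section InternalMultiplication.
Variable C : Category.
Variables (A X Y AX AY P QX QY A3 IX IY : C) (x : Hom X A) (y : Hom Y A).
Variables (iX1 : Hom A AX) (iX2 : Hom X AX) (iY1 : Hom A AY) (iY2 : Hom Y AY).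
Variables (rX0 cX : Hom AX A) (rY0 cY : Hom AY A) (pi1 : Hom P AX) (pi2 : Hom P AY).
Variables (qx : Hom A QX) (qy : Hom A QY) (a1 a2 a3 : Hom A3 A).
Variables (s1 : Hom AX P) (s2 : Hom AY P) (g1 : Hom P A3).
Variables (eX : Hom X IX) (moX : Hom IX A) (eY : Hom Y IY) (moY : Hom IY A).
(* Ordered so that [eapply lemma; eassumption] instantiates every variable unambiguously. *)
Hypotheses (Hpt : pointed C) (HR : regular C) (HS : split_short_five C).
Hypotheses (HA3 : is_A3 qx qy a1 a2 a3) (Hqx : is_cokernel x qx) (Hqy : is_cokernel y qy).
Hypothesis HP : is_pullback rX0 rY0 pi1 pi2.
Hypotheses (G1 : a1 \o g1 = cX \o pi1) (G2 : a2 \o g1 = rX0 \o pi1) (G3 : a3 \o g1 = cY \o pi2).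
Hypotheses (S11 : pi1 \o s1 = idm AX) (S12 : pi2 \o s1 = iY1 \o rX0).
Hypotheses (S21 : pi1 \o s2 = iX1 \o rY0) (S22 : pi2 \o s2 = idm AY).
Hypotheses (CX1 : cX \o iX1 = idm A) (CX2 : cX \o iX2 = x).
Hypotheses (CY1 : cY \o iY1 = idm A) (CY2 : cY \o iY2 = y).
Hypotheses (RX1 : rX0 \o iX1 = idm A) (RX2 : is_zero_mor (rX0 \o iX2)).
Hypothesis RY2 : is_zero_mor (rY0 \o iY2).
Hypotheses (Ex : x = moX \o eX) (NX : normal_mono moX) (ReX : regular_epi eX).
Hypotheses (Ey : y = moY \o eY) (NY : normal_mono moY) (ReY : regular_epi eY).

Lemma kernel_qx : is_kernel qx moX.
Proof. exact (normal_image_cokernel_kernel Hpt ReX NX Ex Hqx). Qed.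

Lemma kernel_qy : is_kernel qy moY.
Proof. exact (normal_image_cokernel_kernel Hpt ReY NY Ey Hqy). Qed.

Lemma gamma1_on_diagonal (d : Hom A A3) :
  a1 \o d = idm A -> a2 \o d = idm A -> a3 \o d = idm A -> g1 \o (s1 \o iX1) = d.
Proof. intros D1 D2 D3. apply (A3_hom_eq HA3); cat_simp; reflexivity. Qed.

Lemma gamma1_on_X (u : Hom X A3) :
  a1 \o u = x -> is_zero_mor (a2 \o u) -> is_zero_mor (a3 \o u) -> g1 \o (s1 \o iX2) = u.
Proof.
  intros U1 U2 U3. apply (A3_hom_eq HA3); cat_simp; try reflexivity; apply zero_mor_eq; zero_mor.
Qed.

Lemma gamma1_on_Y (u : Hom Y A3) :
  is_zero_mor (a1 \o u) -> is_zero_mor (a2 \o u) -> a3 \o u = y -> g1 \o (s2 \o iY2) = u.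
Proof.
  intros U1 U2 U3. apply (A3_hom_eq HA3); cat_simp; try reflexivity; apply zero_mor_eq; zero_mor.
Qed.

Lemma gamma1_regular_epi : regular_epi g1.
Proof.
  pose proof HR as [HL _].
  apply (extremal_epi_regular HR). intros S j g Mj Eg.
  assert (Himage : forall T (v : Hom T P), factors_through j (g1 \o v))
    by (intros T v; exists (g \o v); rewrite comp_assoc, Eg; reflexivity).
  destruct (proj2 HL _ _ _ qy qy) as [KY [c1 [c2 HKY]]].
  destruct (proj2 (proj2 HA3) KY c1 c1 c2 eq_refl (proj1 HKY)) as [sg [[Sg1 [Sg2 Sg3]] _]].
  destruct (pullback_hom_exists HKY a2 a3 (proj1 (proj2 HA3))) as [rho [Rh1 Rh2]].
  (* [rho = <a2,a3>] is split by [sg = <c1,c1,c2>] and has kernel [ka = <moX,0,0>]. *)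
  assert (Hsplit : rho \o sg = idm KY) by (apply (pullback_hom_eq HKY); cat_simp; reflexivity).
  destruct (zero_mor_exists Hpt IX A) as [z Hz].
  destruct (proj2 (proj2 HA3) IX moX z z) as [ka [[K1 [K2 K3]] _]];
    [apply zero_mor_eq; [exact (proj1 kernel_qx) | zero_mor] | reflexivity |].
  assert (Hka : is_kernel rho ka)
    by (apply (A3_proj23_kernel HA3 Hpt kernel_qx HKY Rh1 Rh2 K1); rewrite ?K2, ?K3; exact Hz).
  destruct (pullback_hom_exists HKY (idm A) (idm A) eq_refl) as [dY [D1 D2]].
  destruct (kernel_pair_proj_kernel Hpt kernel_qy (pullback_swap HKY)) as [wY [W2 [W1 HwY]]].
  assert (Fsg : factors_through j sg).
  { apply (factors_through_of_split_ext HS HL D1 HwY Mj).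
    - rewrite <- gamma1_on_diagonal by (cat_simp; reflexivity). apply Himage.
    - apply (regular_epi_factors_through ReY Mj).
      rewrite <- gamma1_on_Y by (cat_simp; first [exact (eq_sym Ey) | zero_mor]). apply Himage. }
  assert (Fka : factors_through j ka).
  { apply (regular_epi_factors_through ReX Mj).
    rewrite <- gamma1_on_X by (cat_simp; first [exact (eq_sym Ex) | rewrite ?K2, ?K3; zero_mor]).
    apply Himage. }
  exact (split_ext_mono_iso HS Hsplit Hka Mj Fsg Fka).
Qed.

Variable m : Hom P A.
Hypotheses (Ms1 : m \o s1 = cX) (Ms2 : m \o s2 = cY).

Lemma multiplication_kills_gamma1_kernel {N : C} (n : Hom N P) :
  is_kernel g1 n -> is_zero_mor (m \o n).
Proof.
  intros Hn. pose proof HR as [HL _]. pose proof (proj1 Hn) as Zn.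
  assert (Zn1 : is_zero_mor (cX \o (pi1 \o n))) by (rewrite comp_assoc, <- G1; zero_mor).
  assert (Zn2 : is_zero_mor (rX0 \o (pi1 \o n))) by (rewrite comp_assoc, <- G2; zero_mor).
  assert (Zn3 : is_zero_mor (cY \o (pi2 \o n))) by (rewrite comp_assoc, <- G3; zero_mor).
  assert (Zn4 : is_zero_mor (rY0 \o (pi2 \o n))) by (rewrite comp_assoc, <- (proj1 HP); zero_mor).
  (* [pi2] restricts to a split epimorphism [qN] from [ker g1] onto [ker (g1 s2)],
     split by [s2]; on the kernel of [qN] the map [n] factors through [s1]. *)
  destruct (kernel_exists Hpt HL (g1 \o s2)) as [N2 [n2 Hn2]].
  pose proof (proj1 Hn2) as Zn2'.
  destruct (proj2 Hn2 _ (pi2 \o n)) as [qN [QN _]].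
  { rewrite <- comp_assoc. apply (A3_zero_mor HA3 Hpt); cat_simp; zero_mor. }
  destruct (proj2 Hn _ (s2 \o n2)) as [sN [SN _]]; [zero_mor|].
  assert (Hsplit : qN \o sN = idm N2).
  { apply (kernel_mono Hn2). rewrite comp_id_r, (comp_eq_assoc QN), <- comp_assoc, SN.
    cat_simp. reflexivity. }
  destruct (kernel_exists Hpt HL qN) as [Kq [kq Hkq]].
  destruct (zero_mor_exists Hpt N A) as [zN HzN].
  replace (m \o n) with zN; auto. symmetry.
  apply (split_ext_jointly_epic HS HL Hsplit Hkq).
  - assert (Hnk : n \o kq = s1 \o (pi1 \o (n \o kq))).
    { apply (pullback_hom_eq HP); cat_simp; [reflexivity|].
      apply zero_mor_eq; [rewrite comp_assoc, <- QN; pose proof (proj1 Hkq) | ]; zero_mor. }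
    apply zero_mor_eq; [|zero_mor].
    rewrite <- comp_assoc, Hnk, (comp_eq_assoc Ms1). zero_mor.
  - apply zero_mor_eq; [|zero_mor].
    assert (Z3 : is_zero_mor (a3 \o (g1 \o (s2 \o n2)))) by zero_mor.
    rewrite (comp_eq_assoc G3), <- comp_assoc, (comp_eq_assoc S22), comp_id_l in Z3.
    rewrite <- comp_assoc, SN, (comp_eq_assoc Ms2). exact Z3.
Qed.

Lemma gamma1_factor_pregroupoid (p : Hom A3 A) :
  p \o g1 = m -> internal_pregroupoid qx qy a1 a2 a3 p.
Proof.
  intros Hp. pose proof HR as [HL _]. split.
  - intros K k1 k2 HK t T1 T2 T3.
    destruct (pullback_hom_exists HK (idm A) (idm A) eq_refl) as [d [D1 D2]].
    destruct (kernel_pair_proj_kernel Hpt kernel_qx HK) as [w [W1 [W2 Hw]]].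
    apply (split_ext_jointly_epic HS HL D2 Hw).
    + apply (regular_epi_epi ReX). assoc_r.
      rewrite <- (gamma1_on_X (t \o (w \o eX))) by (cat_simp; first [exact (eq_sym Ex) | zero_mor]).
      cat_simp. exact Ex.
    + assoc_r. rewrite <- (gamma1_on_diagonal (t \o d)) by (cat_simp; reflexivity).
      cat_simp. reflexivity.
  - intros K k1 k2 HK t T1 T2 T3.
    destruct (pullback_hom_exists HK (idm A) (idm A) eq_refl) as [d [D1 D2]].
    destruct (kernel_pair_proj_kernel Hpt kernel_qy (pullback_swap HK)) as [w [W2 [W1 Hw]]].
    apply (split_ext_jointly_epic HS HL D1 Hw).
    + apply (regular_epi_epi ReY). assoc_r.
      rewrite <- (gamma1_on_Y (t \o (w \o eY))) by (cat_simp; first [exact (eq_sym Ey) | zero_mor]).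
      cat_simp. exact Ey.
    + assoc_r. rewrite <- (gamma1_on_diagonal (t \o d)) by (cat_simp; reflexivity).
      cat_simp. reflexivity.
Qed.

End InternalMultiplication.

Theorem theorem1p8 (C : Category)
  (HC : homological C) (Hcol : has_finite_colimits C)
  (A X Y : C) (x : Hom X A) (y : Hom Y A)
  (Hx : image_is_normal x) (Hy : image_is_normal y)
  (* A + X and A + Y *)
  (AX : C) (iX1 : Hom A AX) (iX2 : Hom X AX) (HAX : is_coproduct iX1 iX2)
  (AY : C) (iY1 : Hom A AY) (iY2 : Hom Y AY) (HAY : is_coproduct iY1 iY2)
  (* [1,0] and [1,x], [1,y] *)
  (rX0 : Hom AX A) (HrX0 : is_copair_id_zero iX1 iX2 rX0)
  (rY0 : Hom AY A) (HrY0 : is_copair_id_zero iY1 iY2 rY0)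
  (cX : Hom AX A) (HcX : is_copair iX1 iX2 (idm A) x cX)
  (cY : Hom AY A) (HcY : is_copair iY1 iY2 (idm A) y cY)
  (* (A+X) x_A (A+Y) *)
  (P : C) (pi1 : Hom P AX) (pi2 : Hom P AY) (HP : is_pullback rX0 rY0 pi1 pi2)
  (* A/X, A/Y *)
  (QX : C) (qx : Hom A QX) (Hqx : is_cokernel x qx)
  (QY : C) (qy : Hom A QY) (Hqy : is_cokernel y qy)
  (* A_3 *)
  (A3 : C) (a1 a2 a3 : Hom A3 A) (HA3 : is_A3 qx qy a1 a2 a3)
  (m : Hom P A)
  (Hm : internal_multiplication iX1 iY1 rX0 rY0 cX cY pi1 pi2 m) :
  exists p : Hom A3 A,
    factors_gamma1 rX0 cX cY pi1 pi2 a1 a2 a3 m p /\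
    (forall p' : Hom A3 A, factors_gamma1 rX0 cX cY pi1 pi2 a1 a2 a3 m p' -> p' = p) /\
    internal_pregroupoid qx qy a1 a2 a3 p.
Proof.
  destruct HC as [Hpt [HR HS]].
  destruct Hx as [IX [eX [moX [ReX [_ [Ex NX]]]]]].
  destruct Hy as [IY [eY [moY [ReY [_ [Ey NY]]]]]].
  destruct (A3_map_exists HA3 HP (cokernel_coequalizes_copairs HAX HcX HrX0 Hqx)
              (cokernel_coequalizes_copairs HAY HcY HrY0 Hqy)) as [g1 [G1 [G2 G3]]].
  destruct HrX0 as [RX1 RX2], HrY0 as [RY1 RY2], HcX as [CX1 CX2], HcY as [CY1 CY2].
  destruct (pullback_graph_l iY1 HP RY1) as [s1 [S11 S12]].
  destruct (pullback_graph_r iX1 HP RX1) as [s2 [S21 S22]].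
  pose proof (proj1 Hm s1 S11 S12) as Ms1.
  pose proof (proj2 Hm s2 S21 S22) as Ms2.
  assert (Rg : regular_epi g1) by (eapply gamma1_regular_epi; eassumption).
  destruct (kernel_exists Hpt (proj1 HR) g1) as [N [n Hn]].
  destruct (regular_epi_factor_of_kernel HR HS Hpt m Rg Hn) as [p Hp].
  { eapply multiplication_kills_gamma1_kernel; eassumption. }
  exists p. split; [|split].
  - intros g E1 E2 E3. replace g with g1; [exact Hp |]. apply (A3_hom_eq HA3); congruence.
  - intros p' Hp'. apply (regular_epi_epi Rg). rewrite Hp. apply Hp'; assumption.
  - eapply gamma1_factor_pregroupoid; eassumption.
Qed.
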